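(* Let $G$ be a finite group, $p\neq q$ odd primes, $P$ a $p$-subgroup and $Q_1\le Q$ $q$-subgroups of $G$. Assume $P$ normalizes $Q_1$ and $Q$ normalizes $Q_1P$. Then $QP$ is a subgroup of $G$ with $Q$ a Sylow $q$-subgroup and $P$ a Sylow $p$-subgroup of $QP$, and $Q_1P\trianglelefteq QP$, $Q_1\trianglelefteq QP$. Moreover $Q=[Q_1,P]\,N_Q(P)$, where $[Q_1,P]\trianglelefteq QP$ and $[Q_1,P]\cap N_Q(P)=C_{[Q_1,P]}(P)\le\Phi([Q_1,P])$.
   Context: $\Phi(X)$ is the Frattini subgroup of $X$; $[Q_1,P]$ is the commutator subgroup. *)

From mathcomp Require Import all_boot all_fingroup all_solvable.

From mathcomp Require Import all_boot all_fingroup all_solvable.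

Set Implicit Arguments.
Unset Strict Implicit.
Unset Printing Implicit Defensive.
Import GroupScope.
Local Open Scope group_scope.

(* Since Q normalises Q1 P, the product Q P is a group in which Q1 P is normal
   with Sylow p-subgroup P, and the Frattini argument gives Q = Q1 N_Q(P).  The
   coprime action of P on the solvable group Q1 splits Q1 = [Q1, P] C_Q1(P),
   whence Q = [Q1, P] N_Q(P).  For K = [Q1, P] coprimality also gives
   [K, P] = K; in the abelian quotient K / Phi(K) the fixed points of P meet
   [K / Phi(K), P] = K / Phi(K) trivially, and fixed points of a coprime action
   lift through quotients, so C_K(P) lies in Phi(K). *)

Lemma pnat_p' (p q n : nat) : p != q -> p.-nat n -> q^'.-nat n.
Proof. by move=> npq; apply: sub_in_pnat => r _; rewrite !inE => /eqP->. Qed.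

Section CoprimeAction.

Variable gT : finGroupType.
Implicit Types A G H K : {group gT}.

Lemma coprime_commG_mul_cent A G :
  A \subset 'N(G) -> coprime #|G| #|A| -> solvable G -> [~: G, A] * 'C_G(A) = G.
Proof.
move=> nGA coGA solG.
have sKG : [~: G, A] \subset G by rewrite commg_subl.
have nKG : G \subset 'N([~: G, A]) := commg_norml G A.
apply/eqP; rewrite eqEsubset mulG_subG sKG subsetIl /=.
rewrite -quotientSK //= coprime_quotient_cent ?commg_normr //.
by rewrite subsetI subxx /= quotient_cents2r.
Qed.

Lemma coprime_commGid A G :
  A \subset 'N(G) -> coprime #|G| #|A| -> solvable G -> [~: G, A, A] = [~: G, A].
Proof.
move=> nGA coGA solG; set C := 'C_G(A).
have nKC : C \subset 'N([~: G, A]) := subset_trans (subsetIl G _) (commg_norml G A).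
have cCA : C \subset 'C(A) := subsetIr G _.
have nKAC : C \subset 'N([~: G, A, A]) by apply: normsR => //; apply: cents_norm.
rewrite -{2}(coprime_commG_mul_cent nGA coGA solG) commMG //.
by rewrite (commG1P cCA) mulg1.
Qed.

Lemma coprime_setI_norm_cent A H K :
  K \subset H -> A \subset 'N(K) -> coprime #|K| #|A| -> K :&: 'N_H(A) = 'C_K(A).
Proof.
by move=> sKH nKA coKA; rewrite setIA (setIidPl sKH) coprime_norm_cent.
Qed.

Lemma coprime_cent_sub_Phi (p : nat) A K :
  p.-group K -> A \subset 'N(K) -> coprime #|K| #|A| -> [~: K, A] = K ->
  'C_K(A) \subset 'Phi(K).
Proof.
move=> pK nKA coKA defK.
have nFA : A \subset 'N('Phi(K)) := char_norm_trans (Phi_char K) nKA.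
have nFK : K \subset 'N('Phi(K)) := normal_norm (Phi_normal K).
rewrite -quotient_sub1; last exact: subset_trans (subsetIl _ _) nFK.
rewrite coprime_quotient_cent ?Phi_sub ?(pgroup_sol pK) //.
have abKF : abelian (K / 'Phi(K)) := abelem_abelian (Phi_quotient_abelem pK).
have := coprime_abel_cent_TI (morphim_norms _ nKA) (coprime_morph _ coKA) abKF.
by rewrite -quotientR // defK => ->.
Qed.

End CoprimeAction.

Section NormalizedProduct.

Variables (gT : finGroupType) (p : nat) (P Q1 Q : {group gT}).
Hypotheses (pP : p.-group P) (p'Q : p^'.-group Q) (sQ1Q : Q1 \subset Q).
Hypotheses (nQ1P : P \subset 'N(Q1)) (nQ1PQ : Q \subset 'N(Q1 * P)).

Let p'Q1 : p^'.-group Q1 := pgroupS sQ1Q p'Q.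

Lemma group_set_Q1P : group_set (Q1 * P).
Proof. exact/comm_group_setP/esym/normC. Qed.

Let Q1P := Group group_set_Q1P.

Lemma group_set_QP : group_set (Q * P).
Proof.
have -> : Q * P = Q * Q1P by rewrite /= mulgA (mulGSid sQ1Q).
exact/comm_group_setP/normC.
Qed.

Let QP := Group group_set_QP.

Lemma normal_Q1P_QP : Q1 * P <| Q * P.
Proof.
rewrite /normal mulgSS //= mul_subG //.
by rewrite (subset_trans (mulG_subr Q1 P)) ?(normG Q1P).
Qed.

Let nsQ1P_QP : Q1P <| QP := normal_Q1P_QP.

Lemma normal_Q1_QP : Q1 <| Q * P.
Proof.
have [hallQ1 _] := coprime_mulGp_Hall (G := Q1P) (erefl _) p'Q1 pP.
have nsQ1_Q1P : Q1 <| Q1P by rewrite /normal mulG_subl /= mul_subG ?normG.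
rewrite -[Q * P]/(gval QP) -(normal_Hall_pcore hallQ1 nsQ1_Q1P).
exact: char_normal_trans (pcore_char _ _) nsQ1P_QP.
Qed.

Lemma Frattini_factor_Q : Q :=: Q1 * 'N_Q(P).
Proof.
have [_ sylP] := coprime_mulGp_Hall (G := Q1P) (erefl _) p'Q1 pP.
have defQP := Frattini_arg nsQ1P_QP sylP.
have defN : 'N_QP(P) = 'N_Q(P) * P by rewrite /= setIC -group_modr ?normG // setIC.
have nNP : 'N_Q(P) \subset 'N(P) := subsetIr Q _.
have defQ1NP : Q1 * 'N_Q(P) * P = Q * P.
  rewrite -[RHS]/(gval QP) -{}defQP {}defN /= -!mulgA; congr (_ * _).
  by rewrite mulgA (normC nNP) -(normC nNP) -mulgA mulGid.
have tiPQ : P :&: Q = 1 by rewrite setIC coprime_TIg ?(p'nat_coprime p'Q).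
have sQQP : Q \subset Q * P := mulG_subl P Q.
rewrite -[LHS](setIidPr sQQP) /= -defQ1NP -group_modl ?mul_subG ?subsetIl //.
by rewrite tiPQ mulg1.
Qed.

Lemma normal_commQ1P_QP : [~: Q1, P] <| Q * P.
Proof.
have nQ1Q : Q \subset 'N(Q1) := subset_trans (mulG_subl P Q) (normal_norm normal_Q1_QP).
rewrite /normal (subset_trans _ (subset_trans sQ1Q (mulG_subl P Q))) ?commg_subl //=.
rewrite mul_subG ?commg_normr // Frattini_factor_Q mul_subG ?commg_norml //.
by rewrite normsR ?subsetIr // (subset_trans (subsetIl Q _)).
Qed.

Lemma commQ1P_factor_Q : solvable Q1 -> Q :=: [~: Q1, P] * 'N_Q(P).
Proof.
move=> solQ1; have coQ1P := p'nat_coprime p'Q1 pP.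
rewrite {1}Frattini_factor_Q -{1}(coprime_commG_mul_cent nQ1P coQ1P solQ1).
by rewrite -mulgA mulSGid // setISS ?cent_sub.
Qed.

End NormalizedProduct.

Theorem lemma5p3 (gT : finGroupType) (p q : nat) (P Q1 Q : {group gT}) :
  prime p -> prime q -> odd p -> odd q -> p != q ->
  p.-group P -> q.-group Q1 -> q.-group Q -> Q1 \subset Q ->
  P \subset 'N(Q1) -> Q \subset 'N(Q1 * P) ->
  [/\ group_set (Q * P),
      q.-Sylow(Q * P) Q,
      p.-Sylow(Q * P) P,
      Q1 * P <| Q * P
    & Q1 <| Q * P] /\
    [/\ Q :=: [~: Q1, P] * 'N_Q(P),
          [~: Q1, P] <| Q * P,
          [~: Q1, P] :&: 'N_Q(P) = 'C_([~: Q1, P])(P)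
        & 'C_([~: Q1, P])(P) \subset 'Phi([~: Q1, P])].
Proof.
move=> _ _ _ _ npq pP qQ1 qQ sQ1Q nQ1P nQ1PQ.
have p'Q : p^'.-group Q by apply: pnat_p' qQ; rewrite eq_sym.
have q'P : q^'.-group P := pnat_p' npq pP.
have coQ1P : coprime #|Q1| #|P| := pnat_coprime qQ1 q'P.
have solQ1 : solvable Q1 := pgroup_sol qQ1.
have gQP := group_set_QP sQ1Q nQ1P nQ1PQ.
have [sylQ _] := coprime_mulpG_Hall (G := Group gQP) (erefl _) qQ q'P.
have [_ sylP] := coprime_mulGp_Hall (G := Group gQP) (erefl _) p'Q pP.
have sKQ1 : [~: Q1, P] \subset Q1 by rewrite commg_subl.
have nKP : P \subset 'N([~: Q1, P]) := commg_normr P Q1.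
have coKP : coprime #|[~: Q1, P]| #|P| := coprimeSg sKQ1 coQ1P.
split; split=> //.
- exact: normal_Q1P_QP sQ1Q nQ1P nQ1PQ.
- exact: normal_Q1_QP pP p'Q sQ1Q nQ1P nQ1PQ.
- exact: commQ1P_factor_Q pP p'Q sQ1Q nQ1P nQ1PQ solQ1.
- exact: normal_commQ1P_QP pP p'Q sQ1Q nQ1P nQ1PQ.
- exact: coprime_setI_norm_cent (subset_trans sKQ1 sQ1Q) nKP coKP.
- exact: coprime_cent_sub_Phi (pgroupS sKQ1 qQ1) nKP coKP
    (coprime_commGid nQ1P coQ1P solQ1).
Qed.
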